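(* Let $\alpha\in(0,1)$, $\sigma=1-\frac{\alpha}{2}$, and let $c^{(\alpha,\sigma)}_{i,k}$ be the L2-1$_\sigma$ coefficients defined in the context. Then for every $k\ge 0$, $$\frac{1}{c^{(\alpha,\sigma)}_{1,k}}<\frac{2\Gamma(1-\alpha)}{\tilde a^{\alpha}}\big((k+\sigma)\tau\big)^{\alpha}.$$
   Context: Let $\tilde a>0$, $T>\tilde a$, $N\in\mathbb{Z}^+$, $\tau=(T-\tilde a)/N$, $t_k=\tilde a+k\tau$ ($k=0,\dots,N$), and $t_{k+\sigma}=t_k+\sigma\tau$. For $1\le i\le k$ define $$a^{(\alpha,\sigma)}_{i,k}=\Big(\log\tfrac{t_{k+\sigma}}{t_{i-1}}\Big)^{1-\alpha}-\Big(\log\tfrac{t_{k+\sigma}}{t_{i}}\Big)^{1-\alpha},$$ $$b^{(\alpha,\sigma)}_{i,k}=\frac{1}{\log\frac{t_{i+1}}{t_{i-1}}}\Big\{\tfrac{2}{2-\alpha}\Big[\Big(\log\tfrac{t_{k+\sigma}}{t_{i-1}}\Big)^{2-\alpha}-\Big(\log\tfrac{t_{k+\sigma}}{t_{i}}\Big)^{2-\alpha}\Big]-\log\tfrac{t_i}{t_{i-1}}\Big[\Big(\log\tfrac{t_{k+\sigma}}{t_{i}}\Big)^{1-\alpha}+\Big(\log\tfrac{t_{k+\sigma}}{t_{i-1}}\Big)^{1-\alpha}\Big]\Big\}.$$ The coefficients are: $c^{(\alpha,\sigma)}_{1,0}=\frac{1}{\Gamma(2-\alpha)\log\frac{t_1}{t_0}}\big(\log\frac{t_\sigma}{t_0}\big)^{1-\alpha}$;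 for $k=1$: $c^{(\alpha,\sigma)}_{1,1}=\frac{a^{(\alpha,\sigma)}_{1,1}-b^{(\alpha,\sigma)}_{1,1}}{\Gamma(2-\alpha)\log\frac{t_1}{t_0}}$, $c^{(\alpha,\sigma)}_{2,1}=\frac{b^{(\alpha,\sigma)}_{1,1}+(\log\frac{t_{1+\sigma}}{t_1})^{1-\alpha}}{\Gamma(2-\alpha)\log\frac{t_2}{t_1}}$; for $k\ge2$: $c^{(\alpha,\sigma)}_{1,k}=\frac{a^{(\alpha,\sigma)}_{1,k}-b^{(\alpha,\sigma)}_{1,k}}{\Gamma(2-\alpha)\log\frac{t_1}{t_0}}$, $c^{(\alpha,\sigma)}_{i,k}=\frac{a^{(\alpha,\sigma)}_{i,k}+b^{(\alpha,\sigma)}_{i-1,k}-b^{(\alpha,\sigma)}_{i,k}}{\Gamma(2-\alpha)\log\frac{t_i}{t_{i-1}}}$ for $2\le i\le k$, and $c^{(\alpha,\sigma)}_{k+1,k}=\frac{b^{(\alpha,\sigma)}_{k,k}+(\log\frac{t_{k+\sigma}}{t_k})^{1-\alpha}}{\Gamma(2-\alpha)\log\frac{t_{k+1}}{t_k}}$. *)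

From Stdlib Require Import Reals.
From Coquelicot Require Import Coquelicot.
Open Scope R_scope.

Definition Gamma (s : R) : R :=
  RInt_gen (fun t => Rpower t (s - 1) * exp (- t)) (at_right 0) (Rbar_locally p_infty).

(* grid: tau = (T - a)/N, t_x = a + x tau  (x real, so t_{k+sigma} is tgrid a T N (k+sigma)) *)
Definition tau (a T : R) (N : nat) : R := (T - a) / INR N.
Definition tgrid (a T : R) (N : nat) (x : R) : R := a + x * tau a T N.

Definition acoef (a T : R) (N : nat) (al sg : R) (i k : nat) : R :=
  let tks := tgrid a T N (INR k + sg) in
  Rpower (ln (tks / tgrid a T N (INR (i - 1)))) (1 - al)
  - Rpower (ln (tks / tgrid a T N (INR i))) (1 - al).

Definition bcoef (a T : R) (N : nat) (al sg : R) (i k : nat) : R :=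
  let tks := tgrid a T N (INR k + sg) in
  let tim1 := tgrid a T N (INR (i - 1)) in
  let ti := tgrid a T N (INR i) in
  let tip1 := tgrid a T N (INR (i + 1)) in
  / ln (tip1 / tim1) *
  ( 2 / (2 - al) * (Rpower (ln (tks / tim1)) (2 - al) - Rpower (ln (tks / ti)) (2 - al))
    - ln (ti / tim1) * (Rpower (ln (tks / ti)) (1 - al) + Rpower (ln (tks / tim1)) (1 - al)) ).

Definition c1coef (a T : R) (N : nat) (al sg : R) (k : nat) : R :=
  let t0 := tgrid a T N 0 in
  let t1 := tgrid a T N 1 in
  match k with
  | O => / (Gamma (2 - al) * ln (t1 / t0)) * Rpower (ln (tgrid a T N sg / t0)) (1 - al)
  | S _ => (acoef a T N al sg 1 k - bcoef a T N al sg 1 k) / (Gamma (2 - al) * ln (t1 / t0))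
  end.

From Stdlib Require Import Reals Lra Classical.
From Coquelicot Require Import Coquelicot.
Open Scope R_scope.

(* Write u0 = log(t_{k+sigma}/t_0) and u1 = log(t_{k+sigma}/t_1), so that log(t_1/t_0) = u0 - u1.
   For k >= 1, concavity of s |-> s^(1-alpha) gives a_{1,k} >= (1-alpha)(u0-u1) u0^(-alpha), and a
   second-order expansion of s^(2-alpha) shows that the trapezoidal-rule defect b_{1,k} is at most
   max(0, a_{1,k} - (1-alpha)(u0-u1) u0^(-alpha)).  Hence
   c_{1,k} >= (1-alpha) u0^(-alpha) / Gamma(2-alpha) = u0^(-alpha) / Gamma(1-alpha).
   For k = 0, concavity of log gives sigma log(t_1/t_0) <= log(t_sigma/t_0) and the same bound.
   Finally u0 = log(1 + (k+sigma) tau / a~) <= (k+sigma) tau / a~ (a~ = t_0), and the factor 2 is slack.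
   The recurrence Gamma(2-alpha) = (1-alpha) Gamma(1-alpha) is proved from the improper integral
   defining Gamma by integration by parts on (0, +oo). *)

Lemma Rpower_pos x y : 0 < Rpower x y.
Proof. exact (exp_pos _). Qed.

Lemma Rpower_base_1 y : Rpower 1 y = 1.
Proof. unfold Rpower; rewrite ln_1, Rmult_0_r; apply exp_0. Qed.

Lemma Rpower_le_nonpos e t u : e <= 0 -> 0 < t <= u -> Rpower u e <= Rpower t e.
Proof.
  intros He Htu.
  replace e with (- - e) by ring; rewrite (Rpower_Ropp u), (Rpower_Ropp t).
  apply Rinv_le_contravar; [apply Rpower_pos | apply Rle_Rpower_l; lra].
Qed.

Lemma is_derive_Rpower y t : 0 < t -> is_derive (fun x => Rpower x y) t (y * Rpower t (y - 1)).
Proof. intros Ht; apply is_derive_Reals, derivable_pt_lim_power, Ht. Qed.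

Lemma ex_derive_Rpower y t : 0 < t -> ex_derive (fun x => Rpower x y) t.
Proof. intros Ht; eexists; apply is_derive_Rpower, Ht. Qed.

Lemma Derive_Rpower y t : 0 < t -> Derive (fun x => Rpower x y) t = y * Rpower t (y - 1).
Proof. intros Ht; apply is_derive_unique, is_derive_Rpower, Ht. Qed.

Lemma nondecreasing_of_derive_nonneg (f df : R -> R) a b : a <= b ->
  (forall x, a <= x <= b -> is_derive f x (df x)) ->
  (forall x, a <= x <= b -> 0 <= df x) -> f a <= f b.
Proof.
  intros Hab Hd Hdf.
  destruct (MVT_gen f a b df) as [c [Hc Hfc]];
    rewrite ?Rmin_left, ?Rmax_right in * by lra.
  - intros x Hx; apply Hd; lra.
  - intros x Hx; apply continuity_pt_filterlim, (ex_derive_continuous (V := R_NormedModule)).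
    eexists; apply Hd, Hx.
  - assert (0 <= df c) by (apply Hdf; lra); nra.
Qed.

Lemma Rpower_le_tangent r u v : 0 <= r <= 1 -> 0 < u -> 0 < v ->
  Rpower v r <= Rpower u r + r * Rpower u (r - 1) * (v - u).
Proof.
  intros Hr Hu Hv.
  set (K := r * Rpower u (r - 1)).
  assert (Hder : forall c t, 0 < t ->
    is_derive (fun x => c * (K * x - Rpower x r)) t (c * (K - r * Rpower t (r - 1)))).
  { intros c t Ht; auto_derive; [apply ex_derive_Rpower, Ht|].
    rewrite Derive_Rpower by exact Ht; ring. }
  destruct (Rle_or_lt u v) as [Huv | Hvu].
  - enough (1 * (K * u - Rpower u r) <= 1 * (K * v - Rpower v r)) by lra.
    apply (nondecreasing_of_derive_nonneg (fun x => 1 * (K * x - Rpower x r))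
      (fun t => 1 * (K - r * Rpower t (r - 1))) u v Huv); [intros; apply Hder; lra|].
    intros t Ht; assert (Rpower t (r - 1) <= Rpower u (r - 1)) by (apply Rpower_le_nonpos; lra).
    unfold K; nra.
  - enough (-1 * (K * v - Rpower v r) <= -1 * (K * u - Rpower u r)) by lra.
    apply (nondecreasing_of_derive_nonneg (fun x => -1 * (K * x - Rpower x r))
      (fun t => -1 * (K - r * Rpower t (r - 1))) v u (Rlt_le _ _ Hvu)); [intros; apply Hder; lra|].
    intros t Ht; assert (Rpower u (r - 1) <= Rpower t (r - 1)) by (apply Rpower_le_nonpos; lra).
    unfold K; nra.
Qed.

Lemma Rpower_ge_taylor2 s u v : 1 <= s <= 2 -> 0 < v <= u ->
  Rpower u s - s * Rpower u (s - 1) * (u - v) + s * (s - 1) / 2 * Rpower u (s - 2) * (u - v) ^ 2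
  <= Rpower v s.
Proof.
  intros Hs Hvu.
  set (phi := fun t => Rpower t s + s * Rpower u (s - 1) * (u - t)
                       - s * (s - 1) / 2 * Rpower u (s - 2) * (u - t) ^ 2).
  enough (- phi v <= - phi u) by (unfold phi in *; rewrite Rminus_diag in *; lra).
  apply (nondecreasing_of_derive_nonneg (fun t => - phi t)
    (fun t => s * (Rpower u (s - 1) + (s - 1) * Rpower u (s - 2) * (t - u) - Rpower t (s - 1)))
    v u (proj2 Hvu)).
  - intros t Ht; unfold phi; auto_derive; [apply ex_derive_Rpower; lra|].
    rewrite Derive_Rpower by lra; field.
  - intros t Ht.
    assert (Htan := Rpower_le_tangent (s - 1) u t ltac:(lra) ltac:(lra) ltac:(lra)).
    replace (s - 1 - 1) with (s - 2) in Htan by ring.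
    apply Rmult_le_pos; lra.
Qed.

Lemma ln_1p_mul_ge r y : 0 <= r <= 1 -> 0 <= y -> r * ln (1 + y) <= ln (1 + r * y).
Proof.
  intros Hr Hy.
  assert (Htan := Rpower_le_tangent r 1 (1 + y) Hr Rlt_0_1 ltac:(lra)).
  rewrite !Rpower_base_1 in Htan.
  rewrite <- ln_Rpower; apply ln_le; [apply Rpower_pos | lra].
Qed.

Lemma ln_1p_le y : 0 <= y -> ln (1 + y) <= y.
Proof. intros Hy; rewrite <- (ln_exp y) at 2; apply ln_le; [lra | apply exp_ineq1_le]. Qed.

(* a_{1,k} - b_{1,k} in the variables u0, u1 of the header and h = log(t_2/t_0) *)
Definition l21_num (al u0 u1 h : R) : R :=
  (Rpower u0 (1 - al) - Rpower u1 (1 - al))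
  - / h * (2 / (2 - al) * (Rpower u0 (2 - al) - Rpower u1 (2 - al))
           - (u0 - u1) * (Rpower u1 (1 - al) + Rpower u0 (1 - al))).

Lemma l21_num_ge al u0 u1 h : 0 < al < 1 -> 0 < u1 < u0 -> u0 - u1 <= h ->
  (1 - al) * (u0 - u1) * Rpower u0 (- al) <= l21_num al u0 u1 h.
Proof.
  intros Hal Hu Hh.
  assert (Htan := Rpower_le_tangent (1 - al) u0 u1 ltac:(lra) ltac:(lra) ltac:(lra)).
  assert (Htay := Rpower_ge_taylor2 (2 - al) u0 u1 ltac:(lra) ltac:(lra)).
  replace (1 - al - 1) with (- al) in Htan by ring.
  replace (2 - al - 1) with (1 - al) in Htay by ring.
  replace (2 - al - 2) with (- al) in Htay by ring.
  unfold l21_num.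
  set (h1 := u0 - u1) in *.
  assert (Hh1 : 0 < h1) by (unfold h1; lra).
  set (A := Rpower u0 (1 - al) - Rpower u1 (1 - al)).
  set (m := (1 - al) * h1 * Rpower u0 (- al)).
  set (B := 2 / (2 - al) * (Rpower u0 (2 - al) - Rpower u1 (2 - al))
            - h1 * (Rpower u1 (1 - al) + Rpower u0 (1 - al))).
  assert (HA : m <= A) by (unfold m, A, h1 in *; lra).
  (* trapezoidal-rule defect of s^(1-al) on [u1, u0], bounded by the second-order expansion *)
  assert (HB : B <= h1 * (A - m)).
  { assert (Hscaled := Rmult_le_compat_l (2 / (2 - al)) _ _
      ltac:(apply Rlt_le, Rdiv_lt_0_compat; lra) Htay).
    unfold B, A, m.
    replace (2 / (2 - al) * (Rpower u0 (2 - al) - (2 - al) * Rpower u0 (1 - al) * h1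
      + (2 - al) * (1 - al) / 2 * Rpower u0 (- al) * h1 ^ 2))
      with (2 / (2 - al) * Rpower u0 (2 - al) - 2 * Rpower u0 (1 - al) * h1
            + (1 - al) * Rpower u0 (- al) * h1 ^ 2) in Hscaled by (field; lra).
    lra. }
  destruct (Rle_or_lt B 0) as [HB0 | HB0].
  - assert (0 <= / h * - B) by (apply Rmult_le_pos; [apply Rlt_le, Rinv_0_lt_compat|]; lra).
    lra.
  - assert (/ h * B <= / h1 * B) by (apply Rmult_le_compat_r, Rinv_le_contravar; lra).
    assert (/ h1 * B <= A - m).
    { apply (Rmult_le_reg_l h1); [lra|].
      rewrite <- Rmult_assoc, Rinv_r, Rmult_1_l; lra. }
    lra.
Qed.

Lemma inv_l21_coef_le al G u0 u1 h : 0 < al < 1 -> 0 < G -> 0 < u1 < u0 -> u0 - u1 <= h ->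
  / (l21_num al u0 u1 h / ((1 - al) * G * (u0 - u1))) <= G * Rpower u0 al.
Proof.
  intros Hal HG Hu Hh.
  assert (Hnum := l21_num_ge al u0 u1 h Hal Hu Hh).
  rewrite Rpower_Ropp in Hnum.
  assert (Hp := Rpower_pos u0 al).
  set (m := (1 - al) * (u0 - u1) * / Rpower u0 al) in Hnum.
  assert (Hm : 0 < m).
  { apply Rmult_lt_0_compat; [nra | apply Rinv_0_lt_compat, Hp]. }
  rewrite Rinv_div.
  replace (G * Rpower u0 al) with ((1 - al) * G * (u0 - u1) / m) by (unfold m; field; lra).
  apply Rmult_le_compat_l; [apply Rmult_le_pos; nra |].
  apply Rinv_le_contravar; lra.
Qed.

Lemma inv_l1_coef_le al G h L : 0 < al < 1 -> 0 < G -> 0 < h -> (1 - al / 2) * h <= L ->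
  / (/ ((1 - al) * G * h) * Rpower L (1 - al)) <= G * Rpower L al.
Proof.
  intros Hal HG Hh HL.
  assert (HL0 : 0 < L) by nra.
  assert (HP := Rpower_pos L (1 - al)).
  assert (HPQ : Rpower L (1 - al) * Rpower L al = L).
  { rewrite <- Rpower_plus; replace (1 - al + al) with 1 by ring; apply Rpower_1, HL0. }
  rewrite Rinv_mult, Rinv_inv.
  apply (Rmult_le_reg_r (Rpower L (1 - al)) _ _ HP).
  rewrite Rmult_assoc, Rinv_l, Rmult_1_r by lra.
  replace (G * Rpower L al * Rpower L (1 - al)) with (G * L)
    by (rewrite Rmult_assoc, (Rmult_comm (Rpower L al)), HPQ; reflexivity).
  assert ((1 - al) * h <= L) by nra.
  nra.
Qed.

Lemma nondecreasing_bounded_lim_pinfty (F : R -> R) M :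
  (forall x y, 1 <= x <= y -> F x <= F y) -> (forall x, 1 <= x -> F x <= M) ->
  exists L, filterlim F (Rbar_locally p_infty) (locally L) /\ forall x, 1 <= x -> F x <= L.
Proof.
  intros Hmono HM.
  set (E := fun r => exists x, 1 <= x /\ r = F x).
  destruct (completeness E) as [L [HLub HLleast]].
  { exists M; intros r [x [Hx ->]]; auto. }
  { exists (F 1), 1; split; [lra | reflexivity]. }
  assert (HFL : forall x, 1 <= x -> F x <= L) by (intros x Hx; apply HLub; exists x; auto).
  exists L; split; [| exact HFL].
  apply filterlim_locally; intros eps; pose proof (cond_pos eps).
  destruct (classic (exists x0, 1 <= x0 /\ L - eps < F x0)) as [[x0 [Hx0 Hlt]] | Hnone].
  - exists x0; intros x Hx; change (Rabs (F x - L) < eps); apply Rabs_def1.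
    + assert (F x <= L) by (apply HFL; lra); lra.
    + assert (F x0 <= F x) by (apply Hmono; lra); lra.
  - exfalso.
    assert (L <= L - eps); [| lra].
    apply HLleast; intros r [x [Hx ->]].
    apply Rnot_lt_le; intros Hlt; apply Hnone; exists x; auto.
Qed.

Lemma nondecreasing_bounded_lim_right0 (F : R -> R) m :
  (forall x y, 0 < x <= y -> y <= 1 -> F x <= F y) -> (forall x, 0 < x <= 1 -> m <= F x) ->
  exists L, filterlim F (at_right 0) (locally L) /\ forall x, 0 < x <= 1 -> L <= F x.
Proof.
  intros Hmono Hm.
  assert (Hinv : forall y, 1 <= y -> 0 < / y <= 1).
  { intros y Hy; split; [apply Rinv_0_lt_compat; lra |].
    rewrite <- Rinv_1; apply Rinv_le_contravar; lra. }
  destruct (nondecreasing_bounded_lim_pinfty (fun y => - F (/ y)) (- m)) as [L [HL HLb]].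
  { intros x y Hxy; apply Ropp_le_contravar, Hmono; [| apply Hinv; lra].
    split; [apply Hinv; lra | apply Rinv_le_contravar; lra]. }
  { intros y Hy; apply Ropp_le_contravar, Hm, Hinv, Hy. }
  exists (- L); split.
  - apply filterlim_ext_loc with (fun x => - (- F (/ / x))).
    + exists (mkposreal 1 Rlt_0_1); intros y _ Hy; rewrite Rinv_inv; ring.
    + apply (filterlim_comp _ _ _ (fun x => - F (/ / x)) Ropp _ (locally L));
        [| apply (filterlim_opp (V := R_NormedModule))].
      apply (filterlim_comp _ _ _ Rinv (fun y => - F (/ y)) _ (Rbar_locally p_infty));
        [apply filterlim_Rinv_0_right | exact HL].
  - intros x Hx.
    assert (- F (/ / x) <= L) by (apply HLb; rewrite <- Rinv_1; apply Rinv_le_contravar; lra).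
    rewrite Rinv_inv in *; lra.
Qed.

Lemma is_RInt_gen_of_antiderivative (f g : R -> R) la lb :
  (forall x, 0 < x -> is_derive f x (g x)) -> (forall x, 0 < x -> continuous g x) ->
  filterlim f (at_right 0) (locally la) -> filterlim f (Rbar_locally p_infty) (locally lb) ->
  is_RInt_gen g (at_right 0) (Rbar_locally p_infty) (lb - la).
Proof.
  intros Hd Hc Hla Hlb.
  assert (Hprod : filter_prod (at_right 0) (Rbar_locally p_infty)
                    (fun ab => forall x, Rmin (fst ab) (snd ab) <= x -> 0 < x)).
  { apply (Filter_prod _ _ _ (fun a => 0 < a) (fun b => 0 < b)).
    - exists (mkposreal 1 Rlt_0_1); intros y _ Hy; exact Hy.
    - exists 0; auto.
    - intros a b Ha Hb x Hx; simpl in Hx; assert (0 < Rmin a b) by (apply Rmin_glb_lt; auto); lra. }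
  apply is_RInt_gen_ext with (Derive f).
  - eapply filter_imp; [| exact Hprod]; intros ab Hab x Hx.
    apply is_derive_unique, Hd, Hab; lra.
  - apply is_RInt_gen_Derive; [| | exact Hla | exact Hlb];
      eapply filter_imp; try exact Hprod; intros ab Hab x Hx;
      assert (Hx0 : 0 < x) by (apply Hab; lra).
    + eexists; apply Hd, Hx0.
    + apply continuous_ext_loc with g; [| apply Hc, Hx0].
      apply (filter_imp (fun y => 0 < y)); [| exact (open_gt 0 x Hx0)].
      intros y Hy; symmetry; apply is_derive_unique, Hd, Hy.
Qed.

Lemma filterlim_scal_minus {T} (F : (T -> Prop) -> Prop) {FF : Filter F} (f g : T -> R) lf lg c :
  filterlim f F (locally lf) -> filterlim g F (locally lg) ->
  filterlim (fun x => c * g x - f x) F (locally (c * lg - lf)).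
Proof.
  intros Hf Hg.
  apply (filterlim_comp_2 (G := locally (scal c lg)) (H := locally (opp lf))
           (fun x => scal c (g x)) (fun x => opp (f x)) (@plus R_NormedModule)).
  - eapply filterlim_comp; [exact Hg | apply (filterlim_scal_r (V := R_NormedModule))].
  - eapply filterlim_comp; [exact Hf | apply (filterlim_opp (V := R_NormedModule))].
  - apply (filterlim_plus (V := R_NormedModule)).
Qed.

Lemma Rpower_mul_exp_opp x s : Rpower x s * exp (- x) = exp (s * ln x - x).
Proof. unfold Rpower; rewrite <- exp_plus; f_equal; ring. Qed.

Lemma filterlim_Rpower_mul_exp_right0 s : 0 < s ->
  filterlim (fun x => Rpower x s * exp (- x)) (at_right 0) (locally 0).
Proof.
  intros Hs.
  apply filterlim_ext with (fun x => exp (s * ln x - x));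
    [intros; symmetry; apply Rpower_mul_exp_opp |].
  eapply filterlim_comp; [| exact is_lim_exp_m].
  intros P [M HM].
  exists (mkposreal (exp (M / s)) (exp_pos _)); intros y Hy Hy0; apply HM.
  change (Rabs (y - 0) < exp (M / s)) in Hy; rewrite Rminus_0_r, Rabs_pos_eq in Hy by lra.
  assert (ln y < M / s) by (rewrite <- (ln_exp (M / s)); apply ln_increasing; auto).
  assert (s * ln y < M).
  { replace M with (s * (M / s)) by (field; lra); apply Rmult_lt_compat_l; lra. }
  lra.
Qed.

Lemma filterlim_Rpower_mul_exp_pinfty s : 0 <= s < 1 ->
  filterlim (fun x => Rpower x s * exp (- x)) (Rbar_locally p_infty) (locally 0).
Proof.
  intros Hs.
  apply filterlim_ext with (fun x => exp (s * ln x - x));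
    [intros; symmetry; apply Rpower_mul_exp_opp |].
  eapply filterlim_comp; [| exact is_lim_exp_m].
  intros P [M HM].
  exists (Rmax 1 (- M / (1 - s))); intros y Hy; apply HM.
  assert (Hy1 : 1 < y) by (eapply Rle_lt_trans; [apply Rmax_l | exact Hy]).
  assert (HyM : - M / (1 - s) < y) by (eapply Rle_lt_trans; [apply Rmax_r | exact Hy]).
  assert (Hln : ln y <= y) by (pose proof (exp_ineq1_le (ln y)); rewrite exp_ln in *; lra).
  assert (- M < (1 - s) * y).
  { apply (Rmult_lt_compat_l (1 - s)) in HyM; [| lra].
    replace ((1 - s) * (- M / (1 - s))) with (- M) in HyM by (field; lra); exact HyM. }
  nra.
Qed.

Definition gamma_integrand (s t : R) : R := Rpower t (s - 1) * exp (- t).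

Lemma Gamma_RInt_gen s :
  Gamma s = RInt_gen (gamma_integrand s) (at_right 0) (Rbar_locally p_infty).
Proof. reflexivity. Qed.

Lemma gamma_integrand_pos s t : 0 < gamma_integrand s t.
Proof. apply Rmult_lt_0_compat; [apply Rpower_pos | apply exp_pos]. Qed.

Lemma continuous_gamma_integrand s t : 0 < t -> continuous (gamma_integrand s) t.
Proof.
  intros Ht; apply (ex_derive_continuous (V := R_NormedModule)); unfold gamma_integrand.
  auto_derive; apply ex_derive_Rpower, Ht.
Qed.

Section GammaRecurrence.

Variable s : R.
Hypothesis Hs : 0 < s < 1.

Definition gamma_partial (x : R) : R := RInt (gamma_integrand s) 1 x.

Lemma is_derive_gamma_partial x : 0 < x -> is_derive gamma_partial x (gamma_integrand s x).
Proof.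
  intros Hx; apply is_derive_RInt with 1.
  - apply (filter_imp (fun y => 0 < y)); [| exact (open_gt 0 x Hx)].
    intros y Hy; unfold gamma_partial.
    apply (RInt_correct (V := R_CompleteNormedModule)),
          (ex_RInt_continuous (V := R_CompleteNormedModule)).
    intros z Hz; apply continuous_gamma_integrand.
    assert (0 < Rmin 1 y) by (apply Rmin_glb_lt; lra); lra.
  - apply continuous_gamma_integrand, Hx.
Qed.

Lemma Derive_gamma_partial x : 0 < x -> Derive gamma_partial x = gamma_integrand s x.
Proof. intros Hx; apply is_derive_unique, is_derive_gamma_partial, Hx. Qed.

Lemma gamma_partial_1 : gamma_partial 1 = 0.
Proof. exact (RInt_point (V := R_CompleteNormedModule) _ _). Qed.

Lemma gamma_partial_le x y : 0 < x <= y -> gamma_partial x <= gamma_partial y.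
Proof.
  intros Hxy; apply (nondecreasing_of_derive_nonneg _ (gamma_integrand s)); [lra | |].
  - intros t Ht; apply is_derive_gamma_partial; lra.
  - intros t _; apply Rlt_le, gamma_integrand_pos.
Qed.

(* compare with the antiderivative -exp(-t) of the larger integrand exp(-t) on [1, x] *)
Lemma gamma_partial_le_1 x : 1 <= x -> gamma_partial x <= 1.
Proof.
  intros Hx.
  enough (- (gamma_partial 1 + exp (- 1)) <= - (gamma_partial x + exp (- x))).
  { rewrite gamma_partial_1 in *; pose proof (exp_pos (- x)); pose proof (exp_pos (- 1)).
    assert (exp (- 1) < exp 0) by (apply exp_increasing; lra); rewrite exp_0 in *; lra. }
  apply (nondecreasing_of_derive_nonneg (fun t => - (gamma_partial t + exp (- t)))
           (fun t => exp (- t) - gamma_integrand s t) 1 x Hx).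
  - intros t Ht; auto_derive; [exists (gamma_integrand s t); apply is_derive_gamma_partial; lra |].
    rewrite Derive_gamma_partial by lra; ring.
  - intros t Ht; unfold gamma_integrand.
    assert (Rpower t (s - 1) <= 1).
    { apply Rle_trans with (Rpower t 0); [apply Rle_Rpower; lra | rewrite Rpower_O; lra]. }
    pose proof (exp_pos (- t)); nra.
Qed.

(* compare with the antiderivative t^s / s of the larger integrand t^(s-1) on [x, 1] *)
Lemma gamma_partial_ge x : 0 < x <= 1 -> - / s <= gamma_partial x.
Proof.
  intros Hx.
  enough (Rpower x s / s - gamma_partial x <= Rpower 1 s / s - gamma_partial 1).
  { rewrite gamma_partial_1, Rpower_base_1 in *.
    assert (0 < Rpower x s / s) by (apply Rdiv_lt_0_compat; [apply Rpower_pos | lra]).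
    unfold Rdiv in *; lra. }
  apply (nondecreasing_of_derive_nonneg (fun t => Rpower t s / s - gamma_partial t)
           (fun t => Rpower t (s - 1) - gamma_integrand s t) x 1 (proj2 Hx)).
  - intros t Ht; auto_derive.
    + split; [apply ex_derive_Rpower; lra |].
      split; [| exact I]; exists (gamma_integrand s t); apply is_derive_gamma_partial; lra.
    + rewrite Derive_Rpower, Derive_gamma_partial by lra; field; lra.
  - intros t Ht; unfold gamma_integrand.
    assert (exp (- t) <= 1) by (rewrite <- exp_0; apply Rlt_le, exp_increasing; lra).
    pose proof (Rpower_pos t (s - 1)); nra.
Qed.

Lemma gamma_partial_limits : exists la lb,
  filterlim gamma_partial (at_right 0) (locally la) /\
  filterlim gamma_partial (Rbar_locally p_infty) (locally lb) /\ la < lb.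
Proof.
  destruct (nondecreasing_bounded_lim_right0 gamma_partial (- / s)) as [la [Hla Hla_le]].
  { intros x y Hxy _; apply gamma_partial_le; lra. }
  { exact gamma_partial_ge. }
  destruct (nondecreasing_bounded_lim_pinfty gamma_partial 1) as [lb [Hlb Hlb_ge]].
  { intros x y Hxy; apply gamma_partial_le; lra. }
  { exact gamma_partial_le_1. }
  exists la, lb; repeat split; [exact Hla | exact Hlb |].
  assert (la <= 0) by (rewrite <- gamma_partial_1; apply Hla_le; lra).
  assert (0 < gamma_partial 2).
  { apply RInt_gt_0; [lra | intros; apply gamma_integrand_pos |].
    intros; apply continuous_gamma_integrand; lra. }
  assert (gamma_partial 2 <= lb) by (apply Hlb_ge; lra).
  lra.
Qed.

Theorem Gamma_pos_succ : 0 < Gamma s /\ Gamma (s + 1) = s * Gamma s.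
Proof.
  destruct gamma_partial_limits as (la & lb & Hla & Hlb & Hlt).
  assert (HG : is_RInt_gen (gamma_integrand s) (at_right 0) (Rbar_locally p_infty) (lb - la)).
  { apply is_RInt_gen_of_antiderivative with gamma_partial; auto.
    - exact is_derive_gamma_partial.
    - exact (continuous_gamma_integrand s). }
  (* integration by parts: s * gamma_partial t - t^s e^(-t) is an antiderivative of t^s e^(-t) *)
  assert (HG1 : is_RInt_gen (gamma_integrand (s + 1)) (at_right 0) (Rbar_locally p_infty)
                  ((s * lb - 0) - (s * la - 0))).
  { apply is_RInt_gen_of_antiderivative
      with (fun t => s * gamma_partial t - Rpower t s * exp (- t)).
    - intros t Ht; unfold gamma_integrand; auto_derive.
      + split; [exists (gamma_integrand s t); apply is_derive_gamma_partial, Ht |].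
        split; [apply ex_derive_Rpower, Ht | exact I].
      + rewrite Derive_gamma_partial, Derive_Rpower by exact Ht.
        replace (s + 1 - 1) with s by ring; unfold gamma_integrand; ring.
    - exact (continuous_gamma_integrand (s + 1)).
    - apply (filterlim_scal_minus (at_right 0)); [| exact Hla].
      apply filterlim_Rpower_mul_exp_right0; lra.
    - apply (filterlim_scal_minus (Rbar_locally p_infty)); [| exact Hlb].
      apply filterlim_Rpower_mul_exp_pinfty; lra. }
  rewrite !Gamma_RInt_gen, (is_RInt_gen_unique _ _ HG), (is_RInt_gen_unique _ _ HG1).
  split; [lra | ring].
Qed.

End GammaRecurrence.

Section Grid.

Variables (a T : R) (N : nat).
Hypotheses (Ha : 0 < a) (HaT : a < T) (HN : (0 < N)%nat).

Local Notation t := (tgrid a T N).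

Lemma tau_pos : 0 < tau a T N.
Proof. apply Rdiv_lt_0_compat; [lra | apply lt_0_INR, HN]. Qed.

Lemma tgrid_pos x : 0 <= x -> 0 < t x.
Proof. intros Hx; pose proof tau_pos; unfold tgrid; nra. Qed.

Lemma tgrid_lt x y : x < y -> t x < t y.
Proof. intros Hxy; pose proof tau_pos; unfold tgrid; nra. Qed.

Lemma ln_tgrid_div_pos x y : 0 <= y < x -> 0 < ln (t x / t y).
Proof.
  intros Hyx; pose proof (tgrid_pos y (proj1 Hyx)); pose proof (tgrid_lt y x (proj2 Hyx)).
  rewrite ln_div by lra; assert (ln (t y) < ln (t x)) by (apply ln_increasing; lra); lra.
Qed.

Lemma ln_tgrid_div_le x y z : 0 <= z <= x -> x <= y -> ln (t x / t z) <= ln (t y / t z).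
Proof.
  intros Hzx Hxy; pose proof tau_pos.
  rewrite !ln_div by (apply tgrid_pos; lra).
  assert (ln (t x) <= ln (t y)) by (apply ln_le; [apply tgrid_pos | unfold tgrid; nra]; lra).
  lra.
Qed.

Lemma ln_tgrid_div_sub x y z : 0 <= x -> 0 <= y -> 0 <= z ->
  ln (t y / t x) = ln (t z / t x) - ln (t z / t y).
Proof. intros Hx Hy Hz; rewrite !ln_div by (apply tgrid_pos; assumption); ring. Qed.

Lemma ln_tgrid_div_t0 x : 0 <= x -> ln (t x / t 0) = ln (1 + x * tau a T N / a).
Proof. intros Hx; f_equal; unfold tgrid; field; lra. Qed.

Lemma ln_tgrid_div_t0_le x : 0 <= x -> ln (t x / t 0) <= x * tau a T N / a.
Proof.
  intros Hx; pose proof tau_pos; rewrite ln_tgrid_div_t0 by exact Hx.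
  apply ln_1p_le, Rmult_le_pos; [nra | apply Rlt_le, Rinv_0_lt_compat, Ha].
Qed.

Lemma ln_tgrid_div_t0_mul_ge sg : 0 <= sg <= 1 -> sg * ln (t 1 / t 0) <= ln (t sg / t 0).
Proof.
  intros Hsg; pose proof tau_pos.
  rewrite !ln_tgrid_div_t0 by lra; rewrite Rmult_1_l.
  replace (sg * tau a T N / a) with (sg * (tau a T N / a)) by (field; lra).
  apply ln_1p_mul_ge; [exact Hsg | apply Rlt_le, Rdiv_lt_0_compat; lra].
Qed.

Lemma c1coef_succ al sg k : 0 <= sg ->
  c1coef a T N al sg (S k)
  = l21_num al (ln (t (INR (S k) + sg) / t 0)) (ln (t (INR (S k) + sg) / t 1)) (ln (t 2 / t 0))
    / (Gamma (2 - al) * (ln (t (INR (S k) + sg) / t 0) - ln (t (INR (S k) + sg) / t 1))).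
Proof.
  intros Hsg.
  assert (Hx : 0 <= INR (S k) + sg) by (pose proof (pos_INR (S k)); lra).
  unfold c1coef, acoef, bcoef, l21_num; cbv zeta.
  replace (INR (1 - 1)) with 0 by reflexivity; replace (INR 1) with 1 by reflexivity.
  replace (INR (1 + 1)) with 2 by (simpl; ring).
  rewrite (ln_tgrid_div_sub 0 1 (INR (S k) + sg)) by lra.
  reflexivity.
Qed.

Lemma inv_c1coef_0_le al : 0 < al < 1 ->
  / c1coef a T N al (1 - al / 2) 0
  <= Gamma (1 - al) * Rpower ((INR 0 + (1 - al / 2)) * tau a T N / a) al.
Proof.
  intros Hal.
  destruct (Gamma_pos_succ (1 - al) ltac:(lra)) as [HG HG2].
  replace (1 - al + 1) with (2 - al) in HG2 by ring.
  unfold c1coef; cbv zeta; rewrite HG2, Rplus_0_l.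
  eapply Rle_trans; [apply inv_l1_coef_le; try assumption |].
  - apply ln_tgrid_div_pos; lra.
  - apply ln_tgrid_div_t0_mul_ge; lra.
  - apply Rmult_le_compat_l, Rle_Rpower_l; [lra | lra | split].
    + apply ln_tgrid_div_pos; lra.
    + apply ln_tgrid_div_t0_le; lra.
Qed.

Lemma inv_c1coef_succ_le al k : 0 < al < 1 ->
  / c1coef a T N al (1 - al / 2) (S k)
  <= Gamma (1 - al) * Rpower ((INR (S k) + (1 - al / 2)) * tau a T N / a) al.
Proof.
  intros Hal.
  destruct (Gamma_pos_succ (1 - al) ltac:(lra)) as [HG HG2].
  replace (1 - al + 1) with (2 - al) in HG2 by ring.
  rewrite c1coef_succ, HG2 by lra.
  assert (Hx : 1 < INR (S k) + (1 - al / 2)) by (pose proof (pos_INR k); rewrite S_INR; lra).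
  set (x := INR (S k) + (1 - al / 2)) in *.
  assert (Hh1 : ln (t 1 / t 0) = ln (t x / t 0) - ln (t x / t 1))
    by (apply ln_tgrid_div_sub; lra).
  assert (0 < ln (t 1 / t 0)) by (apply ln_tgrid_div_pos; lra).
  eapply Rle_trans; [apply inv_l21_coef_le; try assumption |].
  - split; [apply ln_tgrid_div_pos |]; lra.
  - rewrite <- Hh1; apply ln_tgrid_div_le; lra.
  - apply Rmult_le_compat_l, Rle_Rpower_l; [lra | lra | split].
    + apply ln_tgrid_div_pos; lra.
    + apply ln_tgrid_div_t0_le; lra.
Qed.

Lemma inv_c1coef_le al k : 0 < al < 1 ->
  / c1coef a T N al (1 - al / 2) k
  <= Gamma (1 - al) * Rpower ((INR k + (1 - al / 2)) * tau a T N / a) al.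
Proof. destruct k; [apply inv_c1coef_0_le | apply inv_c1coef_succ_le]. Qed.

End Grid.

Theorem lemma2p3 (a T : R) (N : nat) (al : R) (k : nat) :
  0 < a -> a < T -> (0 < N)%nat -> 0 < al < 1 ->
  let sg := 1 - al / 2 in
  / c1coef a T N al sg k
    < 2 * Gamma (1 - al) / Rpower a al * Rpower ((INR k + sg) * tau a T N) al.
Proof.
  intros Ha HaT HN Hal sg.
  assert (HG := proj1 (Gamma_pos_succ (1 - al) ltac:(lra))).
  set (X := (INR k + sg) * tau a T N / a).
  assert (HX : 0 < X).
  { pose proof (pos_INR k); pose proof (tau_pos a T N HaT HN).
    apply Rdiv_lt_0_compat; [apply Rmult_lt_0_compat; unfold sg |]; lra. }
  replace (2 * Gamma (1 - al) / Rpower a al * Rpower ((INR k + sg) * tau a T N) al)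
    with (2 * (Gamma (1 - al) * Rpower X al)).
  - apply Rle_lt_trans with (Gamma (1 - al) * Rpower X al); [apply inv_c1coef_le; assumption |].
    pose proof (Rpower_pos X al); nra.
  - replace ((INR k + sg) * tau a T N) with (a * X) by (unfold X; field; lra).
    rewrite <- Rpower_mult_distr by lra.
    field; apply Rgt_not_eq, Rpower_pos.
Qed.
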